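(* Let $H=P_3$ (the path $1-2-3$) and let $G_i$ be a $d_i$-regular graph of order $n_i$ with adjacency eigenvalues $d_i=\lambda_1(A(G_i)),\dots,\lambda_{n_i}(A(G_i))$, $i=1,2,3$, with $d_1=d_3$. Let $G=\bigvee_{P_3}\{G_1,G_2,G_3\}$ and $s\in\mathbb{R}$. Set $N_1=N_3=n_2$, $N_2=n_1+n_3$, $\sigma(M_i(s))=\{s^2(d_i+N_i-1)-s\lambda_k(A(G_i))+1\}_{k=1}^{n_i}$, $$a(s)=s^2(d_1+n_2-1)-sd_1+1,\qquad b(s)=s^2(d_2+(n_1+n_3)-1)-sd_2+1.$$ Then, as multisets, $$\sigma(M_G(s))=\Big(\bigcup_{i=1}^3\sigma(M_i(s))\cup\Big\{\tfrac12\big(a(s)+b(s)\pm\sqrt{(a(s)-b(s))^2+4s^2n_2(n_1+n_3)}\big)\Big\}\Big)-\{a(s),b(s)\},$$ where one copy each of $a(s)$ and $b(s)$ is removed.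
   Context: For a simple undirected graph $G$ with adjacency matrix $A$, degree matrix $D$ and identity $I$, and real $s$, the deformed Laplacian matrix is $M_G(s)=I-sA+s^2(D-I)$; $\sigma(\cdot)$ is the multiset of eigenvalues. $H$-join: given a graph $H$ on vertex set $\{1,\dots,r\}$ and pairwise vertex-disjoint graphs $G_1,\dots,G_r$, $\bigvee_H\{G_i\}$ has vertex set $\bigcup_iV(G_i)$ and edges $\bigcup_iE(G_i)$ together with all edges $uv$, $u\in V(G_i)$, $v\in V(G_j)$, for each $ij\in E(H)$. *)

From HB Require Import structures.
From mathcomp Require Import all_boot all_order all_algebra.
From mathcomp Require Import reals.
Set Implicit Arguments. Unset Strict Implicit. Unset Printing Implicit Defensive.
Import Order.TTheory GRing.Theory Num.Theory.
Local Open Scope ring_scope.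

Definition simple_graph (T : finType) (e : rel T) : Prop :=
  symmetric e /\ irreflexive e.

Definition degree (T : finType) (e : rel T) (x : T) : nat := #|[set y | e x y]|.

Definition regular (T : finType) (e : rel T) (d : nat) : Prop :=
  forall x, degree e x = d.

Definition adjmx (R : nzRingType) (T : finType) (e : rel T) : 'M[R]_#|T| :=
  \matrix_(i, j) (e (enum_val i) (enum_val j))%:R.

Definition degmx (R : nzRingType) (T : finType) (e : rel T) : 'M[R]_#|T| :=
  \matrix_(i, j) ((degree e (enum_val i))%:R *+ (i == j)).

Definition deformed_laplacian (R : comNzRingType) (T : finType) (e : rel T) (s : R)
  : 'M[R]_#|T| :=
  1%:M - s *: adjmx R e + s ^+ 2 *: (degmx R e - 1%:M).

(* s is the multiset of eigenvalues (with algebraic multiplicity) of A. *)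
Definition spectrum (R : comNzRingType) (n : nat) (A : 'M[R]_n) (s : seq R) : Prop :=
  char_poly A = \prod_(x <- s) ('X - x%:P).

Definition Hjoin_vertex (r : nat) (V : 'I_r -> finType) : finType :=
  {i : 'I_r & V i}.

Definition Hjoin (r : nat) (H : rel 'I_r) (V : 'I_r -> finType)
  (E : forall i, rel (V i)) : rel (Hjoin_vertex V) :=
  fun u v => if tag u == tag v then E (tag u) (tagged u) (tagged_as u v)
             else H (tag u) (tag v).

(* The path P_3 on vertex set {1,2,3} represented as 'I_3 = {0,1,2}. *)
Definition P3 : rel 'I_3 :=
  fun i j => ((i : nat).+1 == j) || ((j : nat).+1 == i).

Definition v1 : 'I_3 := @Ordinal 3 0 isT.
Definition v2 : 'I_3 := @Ordinal 3 1 isT.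
Definition v3 : 'I_3 := @Ordinal 3 2 isT.

From HB Require Import structures.
From mathcomp Require Import all_boot all_order all_algebra all_fingroup.
From mathcomp Require Import reals.
From mathcomp Require Import ring zify.
Import Order.TTheory GRing.Theory Num.Theory.
Set Implicit Arguments. Unset Strict Implicit. Unset Printing Implicit Defensive.
Local Open Scope ring_scope.

(* Let S be the characteristic matrix of the partition of V(G) into the V(G_i).
   Then xI - M_G(s) = B + s S A_H S^T, where B is block diagonal with blocks
   xI - M_i(s).  Since every G_i is regular the partition is equitable:
   B S = S diag(x - a_i), where a_i is the common row sum of M_i(s).  For x
   distinct from all a_i this gives xI - M_G(s) = B (I + S (s diag(x - a_i)^-1 A_H S^T)),
   and det (I + X Y) = det (I + Y X) together with S^T S = diag(n_i) yields
     det (xI - M_G(s)) * prod_i (x - a_i) = prod_i det (xI - M_i(s)) * det (xI - Q)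
   with Q = diag(a_i) - s A_H diag(n_i) the quotient matrix; as polynomials in x
   this holds everywhere.  For H = P_3 one has a_1 = a_3 = a, a_2 = b and
   det (xI - Q) = (x - a) ((x - a) (x - b) - s^2 n_2 (n_1 + n_3)), while a_i is an
   eigenvalue of M_i(s) (eigenvector 1), so the remaining factors x - a and x - b
   cancel against eigenvalues of M_1(s) and M_2(s). *)

Lemma det_castmx (R : comNzRingType) m n (e : m = n) (A : 'M[R]_m) :
  \det (castmx (e, e) A) = \det A.
Proof. by case: n / e; rewrite castmx_id. Qed.

Lemma det_mxdiag (R : comNzRingType) r (p_ : 'I_r -> nat)
    (B_ : forall i, 'M[R]_(p_ i)) :
  \det (\mxdiag_i B_ i) = \prod_i \det (B_ i).
Proof.
elim: r p_ B_ => [|r IH] p_ B_.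
  by rewrite -(det_castmx (big_ord0 _ _ _ _)) det_mx00 big_ord0.
by rewrite mxdiag_recl det_castmx det_ublock IH big_ord_recl.
Qed.

Lemma det_mxsub_bij (R : comNzRingType) m n (f : 'I_m -> 'I_n) (A : 'M[R]_n) :
  bijective f -> \det (mxsub f f A) = \det A.
Proof.
move=> f_bij; have e : m = n.
  by rewrite -(card_ord m) -(card_ord n); apply: bij_eq_card f_bij.
subst n; pose p := perm (bij_inj f_bij).
have -> : mxsub f f A = row_perm p (col_perm p A).
  by apply/matrixP => i j; rewrite !mxE !permE.
rewrite row_permE col_permE !det_mulmx !det_perm odd_permV.
by rewrite mulrCA -expr2 sqrr_sign mulr1.
Qed.

Lemma mxblock_Rank (T : Type) r r' (p_ : 'I_r -> nat) (q_ : 'I_r' -> nat)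
    (B_ : forall i j, 'M[T]_(p_ i, q_ j)) i j (k : 'I_(p_ i)) (l : 'I_(q_ j)) :
  (\mxblock_(i, j) B_ i j) (tagnat.Rank i k) (tagnat.Rank j l) = B_ i j k l.
Proof. by have /matrixP/(_ k l) := mxblockK B_ i j; rewrite mxE. Qed.

Lemma det_blockdiag_tagged (R : comNzRingType) r (V : 'I_r -> finType)
    (B : 'M[R]_#|{: {i : 'I_r & V i}}|) (B_ : forall i, 'M[R]_#|V i|) :
  (forall i (p q : V i), B (enum_rank (Tagged V p)) (enum_rank (Tagged V q)) =
                         B_ i (enum_rank p) (enum_rank q)) ->
  (forall u v, tag u != tag v -> B (enum_rank u) (enum_rank v) = 0) ->
  \det B = \prod_i \det (B_ i).
Proof.
move=> B_block B_off.
pose g (k : 'I_(\sum_i #|V i|)) := Tagged V (enum_val (tagged (tagnat.sig k))).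
have g_bij : bijective g.
  exists (fun u => tagnat.Rank (tag u) (enum_rank (tagged u))) => [k|[i p]].
    by rewrite /g /= enum_valK tagnat.sig2K.
  by rewrite /g /tagnat.Rank tagnat.rankK /= enum_rankK.
rewrite -det_mxdiag -(det_mxsub_bij B (bij_comp (@enum_rank_bij _) g_bij)).
congr (\det _); apply/matrixP => k l; rewrite mxE -(tagnat.sigK k) -(tagnat.sigK l).
case: (tagnat.sig k) => i j; case: (tagnat.sig l) => i' j' /=.
rewrite /mxdiag mxblock_Rank /g !tagnat.rankK /=.
case: (eqVneq i i') => [ii'|ne]; last by rewrite B_off ?mxE.
by subst i'; rewrite conform_mx_id B_block !enum_valK.
Qed.

Lemma det1D_mulmxC (R : comNzRingType) m n (A : 'M[R]_(m, n)) (B : 'M[R]_(n, m)) :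
  \det (1%:M + A *m B) = \det (1%:M + B *m A).
Proof.
pose L := block_mx 1%:M A 0 (1%:M : 'M[R]_n).
pose M := block_mx 1%:M (- A) B (1%:M : 'M[R]_n).
have detL : \det L = 1 by rewrite det_ublock !det1 mulr1.
have LM : L *m M = block_mx (1%:M + A *m B) 0 B 1%:M.
  by rewrite mulmx_block !mul1mx !mul0mx !add0r !mulmx1 addNr.
have ML : M *m L = block_mx 1%:M 0 B (1%:M + B *m A).
  by rewrite mulmx_block !mulmx1 !mulmx0 !addr0 !mul1mx subrr addrC.
have := congr1 determinant LM; rewrite det_mulmx detL mul1r det_lblock det1 mulr1 => <-.
by have := congr1 determinant ML; rewrite det_mulmx detL mulr1 det_lblock det1 mul1r => <-.
Qed.

Lemma horner_char_poly (R : comNzRingType) n (A : 'M[R]_n) x :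
  (char_poly A).[x] = \det (x%:M - A).
Proof.
rewrite /char_poly -horner_evalE -det_map_mx; congr (\det _); apply/matrixP => i j.
by rewrite !mxE /= horner_evalE hornerD hornerN hornerMn hornerX hornerC.
Qed.

Lemma det_scalar_addZ (R : fieldType) n (A : 'M[R]_n) (lam : seq R) (y s : R) :
  char_poly A = \prod_(l <- lam) ('X - l%:P) ->
  \det (y%:M + s *: A) = \prod_(l <- lam) (y + s * l).
Proof.
move=> chA; have size_lam : size lam = n.
  by have := size_char_poly A; rewrite chA size_prod_XsubC => -[].
have [->|s0] := eqVneq s 0.
  under eq_bigr do rewrite mul0r addr0.
  by rewrite scale0r addr0 det_scalar big_const_seq count_predT iter_mulr_1 size_lam.
have -> : y%:M + s *: A = (- s) *: ((- y / s)%:M - A).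
  by apply/matrixP => i j; rewrite !mxE; case: (i == j); rewrite /= ?mulr1n ?mulr0n; field.
rewrite detZ -horner_char_poly chA horner_prod -size_lam -iter_mulr_1 -count_predT.
rewrite -big_const_seq -big_split /=.
by apply: eq_bigr => l _; rewrite !hornerE; field.
Qed.

Lemma eq_poly_cofinite (R : numFieldType) (p q : {poly R}) (S : seq R) :
  (forall x, x \notin S -> p.[x] = q.[x]) -> p = q.
Proof.
move=> eq_pq; apply/eqP; rewrite -subr_eq0; apply/negPn/negP => pq_neq0.
pose w := (p - q) * \prod_(y <- S) ('X - y%:P).
have w_neq0 : w != 0 by rewrite mulf_neq0 // monic_neq0 // monic_prod_XsubC.
have w_root x : root w x.
  rewrite rootM root_prod_XsubC orbC; case: (boolP (x \in S)) => /= xS //.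
  by rewrite rootE !hornerE eq_pq // subrr.
have nat_uniq : uniq [seq k%:R : R | k <- iota 0 (size w)].
  by rewrite map_inj_uniq ?iota_uniq // => i j /eqP; rewrite eqr_nat => /eqP.
suff : (size [seq k%:R : R | k <- iota 0 (size w)] < size w)%N.
  by rewrite size_map size_iota ltnn.
by apply: max_poly_roots nat_uniq => //; apply/allP => x _; apply: w_root.
Qed.

Lemma big_tagged (R : Type) (idx : R) (op : Monoid.com_law idx) (I : finType)
    (V : I -> finType) (F : {i : I & V i} -> R) :
  \big[op/idx]_u F u = \big[op/idx]_i \big[op/idx]_(p : V i) F (Tagged V p).
Proof. by rewrite sig_big_dep; apply: eq_big => // -[]. Qed.

Lemma degreeE (T : finType) (e : rel T) x : degree e x = (\sum_y e x y)%N.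
Proof.
by rewrite /degree -sum1dep_card big_mkcond; apply: eq_bigr => y _; case: (e x y).
Qed.

Lemma regular_degree_in_spectrum (R : fieldType) (T : finType) (e : rel T) d lam :
  symmetric e -> regular e d -> (0 < #|T|)%N -> spectrum (adjmx R e) lam ->
  d%:R \in lam.
Proof.
move=> e_sym e_reg T_gt0 spec_e; rewrite -root_prod_XsubC -spec_e -eigenvalue_root_char.
apply/eigenvalueP; exists (const_mx 1); last first.
  by apply/eqP => /matrixP/(_ 0 (Ordinal T_gt0)); rewrite !mxE; apply/eqP; rewrite oner_eq0.
apply/rowP => j; rewrite !mxE mulr1.
under eq_bigr do rewrite !mxE mul1r e_sym.
by rewrite -(big_enum_val (fun v => (e (enum_val j) v)%:R)) -natr_sum -degreeE e_reg.
Qed.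

Section HjoinRegular.

Variables (R : fieldType) (r : nat) (H : rel 'I_r) (V : 'I_r -> finType).
Variables (E : forall i, rel (V i)) (d : 'I_r -> nat) (s : R).
Arguments E : clear implicits.
Hypothesis H_irr : irreflexive H.
Hypothesis E_reg : forall i, regular (E i) (d i).

Local Notation T := (Hjoin_vertex V).
Local Notation G := (Hjoin H E).

Lemma Hjoin_Tagged i (p q : V i) : G (Tagged V p) (Tagged V q) = E i p q.
Proof. by rewrite /Hjoin /= eqxx tagged_asE. Qed.

Lemma Hjoin_tag_neq (u v : T) : tag u != tag v -> G u v = H (tag u) (tag v).
Proof. by rewrite /Hjoin => /negbTE ->. Qed.

Definition ext_degree i := (\sum_(j | H i j) #|V j|)%N.

Lemma degree_Hjoin i (p : V i) :
  degree G (Tagged V p) = (degree (E i) p + ext_degree i)%N.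
Proof.
rewrite !degreeE big_tagged (bigD1 i) //=; under eq_bigr do rewrite Hjoin_Tagged.
congr (_ + _)%N; rewrite /ext_degree [RHS]big_mkcond [RHS](bigD1 i) //= H_irr add0n.
apply: eq_bigr => j ji; rewrite (eq_bigr (fun=> nat_of_bool (H i j))) => [|q _].
  by rewrite sum_nat_const cardT -cardE; case: (H i j); rewrite ?muln1 ?muln0.
by rewrite Hjoin_tag_neq // eq_sym.
Qed.

(* [ext_degree i] and [block_laplacian i] are the N_i and M_i(s) of the statement. *)
Definition block_eigen i (l : R) := s ^+ 2 * ((d i + ext_degree i)%:R - 1) - s * l + 1.

Definition block_laplacian i : 'M[R]_#|V i| :=
  (block_eigen i 0)%:M - s *: adjmx R (E i).

Definition partition_mx : 'M[R]_(#|T|, r) := \matrix_(k, i) (tag (enum_val k) == i)%:R.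

Lemma partition_mxE k i : partition_mx k i = (tag (enum_val k) == i)%:R.
Proof. exact: mxE. Qed.

Definition relmx : 'M[R]_r := \matrix_(i, j) (H i j)%:R.

Lemma partition_relmx_trE k l :
  (partition_mx *m relmx *m partition_mx^T) k l =
  (H (tag (enum_val k)) (tag (enum_val l)))%:R.
Proof.
rewrite !mxE (bigD1 (tag (enum_val l))) //= big1 => [|j /negbTE jl]; last first.
  by rewrite !mxE eq_sym jl mulr0.
rewrite !mxE eqxx mulr1 addr0 (bigD1 (tag (enum_val k))) //= big1 => [|j /negbTE jk].
  by rewrite !mxE eqxx mul1r addr0.
by rewrite !mxE eq_sym jk mul0r.
Qed.

Lemma tr_partition_mx_mul : partition_mx^T *m partition_mx = diag_mx (\row_i #|V i|%:R).
Proof.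
apply/matrixP => i j; rewrite !mxE.
under eq_bigr do rewrite !mxE.
rewrite -(big_enum_val (fun v : T => (tag v == i)%:R * (tag v == j)%:R)) /= big_tagged.
rewrite (bigD1 i) //= [X in _ + X]big1 => [|i' /negbTE i'i]; last first.
  by rewrite big1 // => q _; rewrite /= i'i mul0r.
rewrite addr0 eqxx; under eq_bigr do rewrite mul1r.
by rewrite sumr_const cardT -cardE; case: (i == j); rewrite ?mulr1n ?mul0rn.
Qed.

Definition block_part x : 'M[R]_#|T| :=
  x%:M - deformed_laplacian G s - s *: (partition_mx *m relmx *m partition_mx^T).

Lemma block_partE x i (p q : V i) :
  block_part x (enum_rank (Tagged V p)) (enum_rank (Tagged V q)) =
  (x%:M - block_laplacian i) (enum_rank p) (enum_rank q).
Proof.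
rewrite /block_part /block_laplacian /deformed_laplacian /adjmx /degmx.
rewrite !(partition_relmx_trE, mxE) !enum_rankK /= H_irr degree_Hjoin E_reg Hjoin_Tagged.
rewrite !(inj_eq enum_rank_inj) eq_Tagged /=.
by case: (p == q); rewrite /block_eigen /= ?mulr1n ?mulr0n; ring.
Qed.

Lemma block_part_off x (u v : T) :
  tag u != tag v -> block_part x (enum_rank u) (enum_rank v) = 0.
Proof.
move=> uv; have /negbTE u_neq_v : enum_rank u != enum_rank v.
  by apply: contraNneq uv => /enum_rank_inj ->.
rewrite /block_part /deformed_laplacian /adjmx /degmx !(partition_relmx_trE, mxE).
by rewrite !enum_rankK u_neq_v Hjoin_tag_neq //= !mulr0n; ring.
Qed.

Lemma det_block_part x lam : (forall i, spectrum (adjmx R (E i)) (lam i)) ->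
  \det (block_part x) = \prod_i \prod_(l <- lam i) (x - block_eigen i l).
Proof.
move=> spec; rewrite (det_blockdiag_tagged (B_ := fun i => x%:M - block_laplacian i)).
- apply: eq_bigr => i _.
  have -> : x%:M - block_laplacian i = (x - block_eigen i 0)%:M + s *: adjmx R (E i).
    by rewrite /block_laplacian opprB addrA addrAC -raddfB.
  rewrite (det_scalar_addZ _ _ (spec i)).
  by apply: eq_bigr => l _; rewrite /block_eigen; ring.
- exact: block_partE.
- exact: block_part_off.
Qed.

Lemma block_laplacian_rowsum x i (p : V i) :
  \sum_q (x%:M - block_laplacian i) (enum_rank p) (enum_rank q) = x - block_eigen i (d i)%:R.
Proof.
have diagE (y : R) : \sum_q y *+ (p == q) = y.
  by rewrite (bigD1 p) //= eqxx big1 ?addr0 // => q; rewrite eq_sym => /negbTE ->.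
under eq_bigr do rewrite /block_laplacian !mxE !enum_rankK (inj_eq enum_rank_inj).
rewrite big_split sumrN sumrB !diagE -mulr_sumr -natr_sum -degreeE E_reg /=.
by rewrite /block_eigen; ring.
Qed.

Lemma block_part_partition_mx x :
  block_part x *m partition_mx =
  partition_mx *m diag_mx (\row_i (x - block_eigen i (d i)%:R)).
Proof.
apply/matrixP => k j; rewrite mul_mx_diag !mxE -[k]enum_valK; case: (enum_val k) => i p.
rewrite (reindex (@enum_rank T)) /=; last by apply/onW_bij/enum_rank_bij.
under eq_bigr do rewrite partition_mxE enum_rankK.
rewrite enum_rankK big_tagged (bigD1 j) //= [X in _ + X]big1 ?addr0 => [|j' /negbTE j'j].
  under eq_bigr do rewrite eqxx mulr1.
  case: (eqVneq i j) => [<-|ij]; last by rewrite mul0r big1 // => q _; rewrite block_part_off.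
  by rewrite mul1r -(block_laplacian_rowsum x p); apply: eq_bigr => q _; rewrite block_partE.
by rewrite big1 // => q _; rewrite j'j mulr0.
Qed.

Definition quotient_mx : 'M[R]_r :=
  \matrix_(i, j) (block_eigen i (d i)%:R *+ (i == j) - s * (H i j)%:R * #|V j|%:R).

Lemma det_Hjoin_quotient x : (forall i, x != block_eigen i (d i)%:R) ->
  \det (x%:M - deformed_laplacian G s) * \prod_i (x - block_eigen i (d i)%:R) =
  \det (block_part x) * \det (x%:M - quotient_mx).
Proof.
move=> x_neq; set D := diag_mx (\row_i (x - block_eigen i (d i)%:R)).
have D_unit : D \in unitmx.
  by rewrite unitmxE unitfE det_diag; apply/prodf_neq0 => i _; rewrite mxE subr_eq0.
have -> : x%:M - deformed_laplacian G s = block_part x *m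
    (1%:M + partition_mx *m (s *: (invmx D *m relmx *m partition_mx^T))).
  rewrite mulmxDr mulmx1 mulmxA block_part_partition_mx -scalemxAr !mulmxA.
  by rewrite -(mulmxA partition_mx) mulmxV // mulmx1 /block_part subrK.
rewrite det_mulmx det1D_mulmxC -scalemxAl -!mulmxA tr_partition_mx_mul -mulrA.
congr (_ * _); have -> : \prod_i (x - block_eigen i (d i)%:R) = \det D.
  by rewrite det_diag; apply: eq_bigr => i _; rewrite mxE.
rewrite mulrC -det_mulmx mulmxDr mulmx1 -scalemxAr (mulmxA D) mulmxV // mul1mx.
congr (\det _); apply/matrixP => i j; rewrite mul_mx_diag !mxE.
by case: (i == j); rewrite /= ?mulr1n ?mulr0n; ring.
Qed.

End HjoinRegular.

Lemma char_poly_Hjoin (R : numFieldType) r (H : rel 'I_r) (V : 'I_r -> finType)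
    (E : forall i, rel (V i)) (d : 'I_r -> nat) (lam : 'I_r -> seq R) (s : R) :
  irreflexive H -> (forall i, regular (E i) (d i)) ->
  (forall i, spectrum (adjmx R (E i)) (lam i)) ->
  char_poly (deformed_laplacian (Hjoin H E) s) *
    \prod_i ('X - (block_eigen H V d s i (d i)%:R)%:P) =
  \prod_i \prod_(l <- lam i) ('X - (block_eigen H V d s i l)%:P) *
    char_poly (quotient_mx H V d s).
Proof.
move=> H_irr E_reg spec.
apply: (@eq_poly_cofinite _ _ _ [seq block_eigen H V d s i (d i)%:R | i <- enum 'I_r]).
move=> x x_notin; have x_neq i : x != block_eigen H V d s i (d i)%:R.
  by apply: contraNneq x_notin => ->; apply: map_f; rewrite mem_enum.
rewrite !hornerM !horner_char_poly !horner_prod.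
under eq_bigr do rewrite hornerXsubC.
under [in RHS]eq_bigr do (rewrite horner_prod; under eq_bigr do rewrite hornerXsubC).
by rewrite (det_Hjoin_quotient H_irr E_reg x_neq) (det_block_part s H_irr E_reg x spec).
Qed.

Lemma big_ord3 (R : Type) (idx : R) (op : Monoid.law idx) (F : 'I_3 -> R) :
  \big[op/idx]_i F i = op (F v1) (op (F v2) (F v3)).
Proof.
rewrite !big_ord_recl big_ord0 Monoid.mulm1.
by congr (op (F _) (op (F _) (F _))); apply: val_inj.
Qed.

Lemma P3_irreflexive : irreflexive P3.
Proof. by case=> -[|[|[|]]]. Qed.

Lemma ext_degree_P3 (V : 'I_3 -> finType) i :
  ext_degree P3 V i = if i == v2 then (#|V v1| + #|V v3|)%N else #|V v2|.
Proof.
by rewrite /ext_degree big_mkcond big_ord3; case: i => -[|[|[|]]] //= _; rewrite ?addn0.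
Qed.

Lemma det_mx22 (R : comNzRingType) (A : 'M[R]_2) :
  \det A = A ord0 ord0 * A ord_max ord_max - A ord0 ord_max * A ord_max ord0.
Proof.
rewrite (expand_det_row _ ord0) !big_ord_recl big_ord0 /cofactor !det_mx11 !mxE /=.
have -> : lift ord0 ord0 = ord_max :> 'I_2 by apply: val_inj.
have -> : lift ord_max 0 = ord0 :> 'I_2 by apply: val_inj.
by rewrite addn0 add0n expr0 expr1; ring.
Qed.

Lemma det_mx33 (R : comNzRingType) (A : 'M[R]_3) :
  \det A = A v1 v1 * (A v2 v2 * A v3 v3 - A v2 v3 * A v3 v2)
         - A v1 v2 * (A v2 v1 * A v3 v3 - A v2 v3 * A v3 v1)
         + A v1 v3 * (A v2 v1 * A v3 v2 - A v2 v2 * A v3 v1).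
Proof.
rewrite (expand_det_row _ v1) big_ord3 /cofactor !det_mx22 !mxE.
have -> : lift v1 ord0 = v2 by apply: val_inj.
have -> : lift v1 ord_max = v3 by apply: val_inj.
have -> : lift v2 ord0 = v1 by apply: val_inj.
have -> : lift v2 ord_max = v3 by apply: val_inj.
have -> : lift v3 ord0 = v1 by apply: val_inj.
have -> : lift v3 ord_max = v2 by apply: val_inj.
by rewrite /= expr0 expr1 expr2; ring.
Qed.

Lemma char_poly_quotient_mx_P3 (R : fieldType) (V : 'I_3 -> finType) (d : 'I_3 -> nat)
    (s : R) :
  d v1 = d v3 ->
  let a := block_eigen P3 V d s v1 (d v1)%:R in
  let b := block_eigen P3 V d s v2 (d v2)%:R in
  char_poly (quotient_mx P3 V d s) =
  ('X - a%:P) *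
    (('X - a%:P) * ('X - b%:P) - (s ^+ 2 * #|V v2|%:R * (#|V v1| + #|V v3|)%:R)%:P).
Proof.
move=> d13 a b; have a3 : block_eigen P3 V d s v3 (d v3)%:R = a.
  by rewrite /a /block_eigen !ext_degree_P3 d13.
rewrite /char_poly det_mx33 /char_poly_mx !mxE /= a3 -/a -/b.
by rewrite !(polyCD, polyCM, polyCN, polyCB, polyC_exp, rmorph_nat); ring.
Qed.

Lemma mem_rem_cat (T : eqType) (x y : T) (s1 s2 : seq T) :
  x \in s1 -> x \in s2 -> x \in rem y (s1 ++ s2).
Proof. by rewrite -!has_pred1 !has_count count_rem count_cat; case: (_ && _); lia. Qed.

Lemma eq_prod_XsubC_rem2 (R : idomainType) (p : {poly R}) (L : seq R) a b :
  b \in L -> a \in rem b L ->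
  p * (('X - a%:P) * ('X - b%:P)) = \prod_(x <- L) ('X - x%:P) ->
  p = \prod_(x <- rem a (rem b L)) ('X - x%:P).
Proof.
move=> bL aL; rewrite (perm_big _ (perm_to_rem bL)) big_cons.
rewrite (perm_big _ (perm_to_rem aL)) big_cons /= => eq_p.
have ab_neq0 : ('X - a%:P) * ('X - b%:P) != 0 by rewrite mulf_neq0 ?polyXsubC_eq0.
by apply: (mulIf ab_neq0); rewrite eq_p; ring.
Qed.

Lemma mul_XsubC_quadratic_roots (R : numFieldType) (a b c disc : R) :
  disc ^+ 2 = (a - b) ^+ 2 + 4 * c ->
  ('X - ((a + b + disc) / 2)%:P) * ('X - ((a + b - disc) / 2)%:P) =
  ('X - a%:P) * ('X - b%:P) - c%:P.
Proof.
move=> disc2; set r1 := (a + b + disc) / 2; set r2 := (a + b - disc) / 2.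
have sum_r : r1 + r2 = a + b by rewrite /r1 /r2; field.
have prod_r : r1 * r2 = a * b - c.
  have -> : c = (disc ^+ 2 - (a - b) ^+ 2) / 4 by rewrite disc2; field.
  by rewrite /r1 /r2; field.
transitivity ('X ^+ 2 - (r1 + r2)%:P * 'X + (r1 * r2)%:P).
  by rewrite (polyCD r1) (polyCM r1); ring.
by rewrite sum_r prod_r (polyCD a) (polyCB (a * b)) (polyCM a); ring.
Qed.

Theorem mainTheorem11 (R : realType) (V : 'I_3 -> finType)
  (E : forall i, rel (V i)) (d : 'I_3 -> nat) (lam : 'I_3 -> seq R) (s : R) :
  (forall i, simple_graph (E i)) ->
  (forall i, (0 < #|V i|)%N) ->
  (forall i, regular (E i) (d i)) ->
  (forall i, spectrum (adjmx R (E i)) (lam i)) ->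
  d v1 = d v3 ->
  let n i := #|V i| in
  let N i := if i == v2 then (n v1 + n v3)%N else n v2 in
  let sigmaM i := [seq s ^+ 2 * ((d i + N i)%:R - 1) - s * l + 1 | l <- lam i] in
  let a := s ^+ 2 * ((d v1 + n v2)%:R - 1) - s * (d v1)%:R + 1 in
  let b := s ^+ 2 * ((d v2 + (n v1 + n v3))%:R - 1) - s * (d v2)%:R + 1 in
  let disc := Num.sqrt ((a - b) ^+ 2 + 4 * s ^+ 2 * (n v2)%:R * (n v1 + n v3)%:R) in
  spectrum (deformed_laplacian (Hjoin P3 E) s)
    (rem a (rem b (sigmaM v1 ++ sigmaM v2 ++ sigmaM v3 ++
                   [:: (a + b + disc) / 2; (a + b - disc) / 2]))).
Proof.
move=> simple V_gt0 reg spec d13 n N sigmaM a b disc.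
have sigmaE i : sigmaM i = [seq block_eigen P3 V d s i l | l <- lam i].
  by apply: eq_map => l; rewrite /block_eigen ext_degree_P3.
have prod_sigmaM i : \prod_(l <- lam i) ('X - (block_eigen P3 V d s i l)%:P) =
                     \prod_(x <- sigmaM i) ('X - x%:P) by rewrite sigmaE big_map.
have a1 : block_eigen P3 V d s v1 (d v1)%:R = a by rewrite /block_eigen ext_degree_P3.
have b2 : block_eigen P3 V d s v2 (d v2)%:R = b by rewrite /block_eigen ext_degree_P3.
have a3 : block_eigen P3 V d s v3 (d v3)%:R = a by rewrite /block_eigen ext_degree_P3 -d13.
have in_sigmaM i : block_eigen P3 V d s i (d i)%:R \in sigmaM i.
  by rewrite sigmaE map_f // (regular_degree_in_spectrum (simple i).1 (reg i) (V_gt0 i)).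
have disc2 : disc ^+ 2 = (a - b) ^+ 2 + 4 * (s ^+ 2 * #|V v2|%:R * (#|V v1| + #|V v3|)%:R).
  rewrite sqr_sqrtr; first by rewrite !mulrA.
  apply: addr_ge0 (sqr_ge0 _) _.
  exact: mulr_ge0 (mulr_ge0 (mulr_ge0 (ler0n _ 4) (sqr_ge0 s)) (ler0n _ _)) (ler0n _ _).
have := char_poly_Hjoin s P3_irreflexive reg spec.
rewrite !big_ord3 /= char_poly_quotient_mx_P3 // a1 b2 a3 -(mul_XsubC_quadratic_roots disc2).
rewrite !prod_sigmaM => charM.
apply: eq_prod_XsubC_rem2; first by rewrite !mem_cat -b2 in_sigmaM orbT.
  apply: mem_rem_cat; first by rewrite -a1 in_sigmaM.
  by rewrite !mem_cat -a3 in_sigmaM orbT.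
apply: (mulIf (negbT (polyXsubC_eq0 a))); rewrite -!mulrA charM.
by rewrite !big_cat !big_cons big_nil /= mulr1; ring.
Qed.
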